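(* Let $F\in[0,1]$ and $0\le p\le F$. For $i,j\in\{0,1\}$ let $F'_{ij,\max}=\max\{F'_{ij}(\rho_1\otimes\rho_2):\rho_1,\rho_2\in S_{p,F}\}$ and $F'_{ij,\min}=\min\{F'_{ij}(\rho_1\otimes\rho_2):\rho_1,\rho_2\in S_{p,F}\}$. Then these quantities do not depend on $(i,j)$: $F'_{ij,\max}=F'_{00,\max}$ and $F'_{ij,\min}=F'_{00,\min}$ for all $i,j$.
   Context: For qubit registers $(R,T)$, $|\Psi_{ij}\rangle_{RT}=(I_R\otimes(X^iZ^j)_T)\tfrac1{\sqrt2}(|00\rangle+|11\rangle)$. $S_{p,F}$ is the set of two-qubit density operators $\rho$ with $\rho=p|\Psi_{00}\rangle\langle\Psi_{00}|+(1-p)\sigma$ for some density operator $\sigma$ and $\langle\Psi_{00}|\rho|\Psi_{00}\rangle=F$. For $\rho_1$ on $(A_1,B_1)$ and $\rho_2$ on $(A_2,B_2)$, $p'_{ij}(\rho_1\otimes\rho_2)=\mathrm{Tr}[|\Psi_{ij}\rangle\langle\Psi_{ij}|_{A_1A_2}\rho_1\otimes\rho_2]$ and $F'_{ij}(\rho_1\otimes\rho_2)=\frac1{p'_{ij}}\mathrm{Tr}[|\Psi_{ij}\rangle\langle\Psi_{ij}|_{B_1B_2}|\Psi_{ij}\rangle\langle\Psi_{ij}|_{A_1A_2}\rho_1\otimes\rho_2]$ (postselected end-to-end fidelity of an entanglement swap with Bell-state measurement outcome $ij$ on $(A_1,A_2)$). *)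

From HB Require Import structures.
From mathcomp Require Import all_boot all_order all_algebra.
From mathcomp Require Import complex.
Set Implicit Arguments. Unset Strict Implicit. Unset Printing Implicit Defensive.
Import Order.TTheory GRing.Theory Num.Theory.
Local Open Scope ring_scope.
Local Open Scope complex_scope.

Section Defs.
Variable R : rcfType.
Local Notation qq := (bool * bool)%type.
Local Notation C := R[i].

(* Operators on a finite-dimensional Hilbert space with basis T,
   given by their matrix entries; kets are coordinate functions. *)
Definition op (T : finType) := T -> T -> C.
Definition ket (T : finType) := T -> C.

Definition opmul (T : finType) (A B : op T) : op T :=
  fun x y => \sum_(z : T) A x z * B z y.
Definition trace (T : finType) (A : op T) : C := \sum_(x : T) A x x.
Definition expect (T : finType) (v : ket T) (A : op T) : C :=
  \sum_(x : T) \sum_(y : T) (v x)^* * A x y * v y.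
Definition proj (T : finType) (v : ket T) : op T := fun x y => v x * (v y)^*.

Definition density (T : finType) (rho : op T) : Prop :=
  (forall v : ket T, 0 <= expect v rho) /\ trace rho = 1.

(* qubit = basis {0,1} = bool; a register pair (R,T) has basis bool * bool,
   the first component being register R, the second register T. *)
Definition pauliX : op bool := fun x y => if x == ~~ y then 1 else 0.
Definition pauliZ : op bool := fun x y => if x == y then (if x then -1 else 1) else 0.
Definition opexp (T : finType) (A : op T) (n : bool) : op T :=
  if n then A else (fun x y => if x == y then 1 else 0).

(* (I_R (x) U_T) applied to a ket on (R,T) *)
Definition applyT (U : op bool) (v : ket qq) : ket qq :=
  fun rt => \sum_(t : bool) U rt.2 t * v (rt.1, t).

Definition phiplus : ket qq :=
  fun rt => if rt.1 == rt.2 then (sqrtC 2)^-1 else 0.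

Definition Psi (i j : bool) : ket qq :=
  applyT (opmul (opexp pauliX i) (opexp pauliZ j)) phiplus.

Definition S_pF (p F : R) (rho : op qq) : Prop :=
  density rho /\
  (exists sigma : op qq, density sigma /\
     rho = (fun x y => p%:C * proj (Psi false false) x y + (1 - p)%:C * sigma x y)) /\
  expect (Psi false false) rho = F%:C.

(* Four registers ((A1,B1),(A2,B2)). *)
Definition four := (qq * qq)%type.

Definition tensor (rho1 rho2 : op qq) : op four :=
  fun x y => rho1 x.1 y.1 * rho2 x.2 y.2.

(* M acting on registers (A1,A2), identity on (B1,B2) *)
Definition onA (M : op qq) : op four :=
  fun x y => M (x.1.1, x.2.1) (y.1.1, y.2.1) *
             (if (x.1.2 == y.1.2) && (x.2.2 == y.2.2) then 1 else 0).
(* M acting on registers (B1,B2), identity on (A1,A2) *)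
Definition onB (M : op qq) : op four :=
  fun x y => M (x.1.2, x.2.2) (y.1.2, y.2.2) *
             (if (x.1.1 == y.1.1) && (x.2.1 == y.2.1) then 1 else 0).

Definition pprime (i j : bool) (rho1 rho2 : op qq) : C :=
  trace (opmul (onA (proj (Psi i j))) (tensor rho1 rho2)).

Definition Fprime (i j : bool) (rho1 rho2 : op qq) : C :=
  (pprime i j rho1 rho2)^-1 *
  trace (opmul (onB (proj (Psi i j)))
               (opmul (onA (proj (Psi i j))) (tensor rho1 rho2))).

(* the set of values F'_ij(rho1 (x) rho2), rho1, rho2 in S_{p,F},
   over the pairs for which F'_ij is defined (p'_ij <> 0) *)
Definition Fvalues (p F : R) (i j : bool) (x : C) : Prop :=
  exists rho1 rho2, S_pF p F rho1 /\ S_pF p F rho2 /\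
    pprime i j rho1 rho2 != 0 /\ x = Fprime i j rho1 rho2.

Definition is_max (S : C -> Prop) (x : C) : Prop := S x /\ forall y, S y -> y <= x.
Definition is_min (S : C -> Prop) (x : C) : Prop := S x /\ forall y, S y -> x <= y.

End Defs.

From HB Require Import structures.
From mathcomp Require Import all_boot all_order all_algebra.
From mathcomp Require Import complex.
From mathcomp Require Import ring.
From Stdlib Require Import FunctionalExtensionality PropExtensionality.
Set Implicit Arguments. Unset Strict Implicit. Unset Printing Implicit Defensive.
Import Order.TTheory GRing.Theory Num.Theory.
Local Open Scope ring_scope.

(* Let U := X^i Z^j and W := I_(A1 B1) (x) U_A2 (x) U_B2.  Conjugating by W
   leaves every trace unchanged, maps rho1 (x) rho2 to rho1 (x) (U (x) U) rho2
   (U (x) U)^+, and maps the projectors onto Psi_ij on (A1,A2) and (B1,B2) to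
   the projectors onto Psi_00.  Since (U (x) U) Psi_00 = +-Psi_00, the map
   rho |-> (U (x) U) rho (U (x) U)^+ is an involution of S_{p,F}, so it turns
   the values of F'_ij over S_{p,F} x S_{p,F} bijectively into those of F'_00.
   All these unitaries are signed permutation matrices. *)

(* For an involution g, (W v) x := (-1)^(s x) v (g x) defines a unitary W;
   sperm_ket v = W v and sperm_conj M = W M W^+. *)
Section SignedPermutation.
Variables (R : rcfType) (T : finType) (g : T -> T) (s : T -> bool).
Hypothesis gK : involutive g.
Local Notation C := R[i].
Local Notation sgn x := ((-1) ^+ s x : C).

Definition sperm_ket (v : ket R T) : ket R T := fun x => sgn x * v (g x).

Definition sperm_conj (M : op R T) : op R T :=
  fun x y => sgn x * sgn y * M (g x) (g y).

Let g_inj : injective g := inv_inj gK.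

Let sgn_sqr x : sgn x * sgn x = 1.
Proof. by rewrite -signr_addb addbb. Qed.

Lemma trace_sperm_conj M : trace (sperm_conj M) = trace M.
Proof.
rewrite /trace [RHS](reindex_inj g_inj).
by apply: eq_bigr => x _; rewrite /sperm_conj sgn_sqr mul1r.
Qed.

Lemma sperm_conj_mul A B :
  sperm_conj (opmul A B) = opmul (sperm_conj A) (sperm_conj B).
Proof.
apply: functional_extensionality => x; apply: functional_extensionality => y.
rewrite /sperm_conj /opmul mulr_sumr [RHS](reindex_inj g_inj).
apply: eq_bigr => z _; rewrite gK.
transitivity (sgn (g z) * sgn (g z) * (sgn x * sgn y * (A (g x) z * B z (g y))));
  [by rewrite sgn_sqr mul1r | ring].
Qed.

Lemma sperm_conj_proj v : sperm_conj (proj v) = proj (sperm_ket v).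
Proof.
apply: functional_extensionality => x; apply: functional_extensionality => y.
by rewrite /sperm_conj /proj /sperm_ket rmorphM rmorph_sign; ring.
Qed.

Lemma sperm_conj_comb (a b : C) (M N : op R T) :
  sperm_conj (fun x y => a * M x y + b * N x y) =
  (fun x y => a * sperm_conj M x y + b * sperm_conj N x y).
Proof.
apply: functional_extensionality => x; apply: functional_extensionality => y.
by rewrite /sperm_conj; ring.
Qed.

(* When s is g-invariant, W is self-adjoint. *)
Section SignInvariant.
Hypothesis sgK : forall x, s (g x) = s x.

Lemma expect_sperm_conj v M : expect v (sperm_conj M) = expect (sperm_ket v) M.
Proof.
rewrite /expect [RHS](reindex_inj g_inj); apply: eq_bigr => x _.
rewrite [RHS](reindex_inj g_inj); apply: eq_bigr => y _.
by rewrite /sperm_ket /sperm_conj !gK !sgK rmorphM rmorph_sign; ring.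
Qed.

Lemma density_sperm_conj rho : density rho -> density (sperm_conj rho).
Proof.
case=> rho_psd rho_tr; split; last by rewrite trace_sperm_conj.
by move=> v; rewrite expect_sperm_conj.
Qed.

Lemma sperm_conjK : involutive sperm_conj.
Proof.
move=> M; apply: functional_extensionality => x.
apply: functional_extensionality => y.
rewrite /sperm_conj !gK !sgK.
transitivity (sgn x * sgn x * (sgn y * sgn y) * M x y); first by ring.
by rewrite !sgn_sqr !mul1r.
Qed.

End SignInvariant.

End SignedPermutation.

Section LocalPauli.
Variables (R : rcfType) (i j : bool).
Local Notation qq := (bool * bool)%type.

(* (flipT, signT), (flip2, sign2) and (flip4, sign4) realise I (x) U,
   U (x) U and W respectively. *)
Definition flipT (x : qq) : qq := (x.1, x.2 (+) i).
Definition signT (x : qq) : bool := j && x.2.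

Definition flip2 (x : qq) : qq := (x.1 (+) i, x.2 (+) i).
Definition sign2 (x : qq) : bool := (j && x.1) (+) (j && x.2).

Definition flip4 (x : four) : four := (x.1, flip2 x.2).
Definition sign4 (x : four) : bool := sign2 x.2.

Lemma flip2K : involutive flip2.
Proof. by case=> a b; rewrite /flip2 /= !addbK. Qed.

Lemma flip4K : involutive flip4.
Proof. by case=> a b; rewrite /flip4 /= flip2K. Qed.

Lemma sign2_flip2 x : sign2 (flip2 x) = sign2 x.
Proof. by case: x => a b; rewrite /sign2 /flip2; case: i; case: j; case: a; case: b. Qed.

Lemma sperm_ket_Psi : sperm_ket flipT signT (Psi R i j) = Psi R false false.
Proof.
apply: functional_extensionality => -[r t].
rewrite /sperm_ket /flipT /signT /Psi /applyT /opmul /opexp /pauliX /pauliZ.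
rewrite /phiplus !big_bool.
by case: i; case: j; case: r; case: t => /=; ring.
Qed.

Lemma sperm_ket_Psi00 : sperm_ket flip2 sign2 (Psi R false false) = Psi R false false.
Proof.
apply: functional_extensionality => -[a b].
rewrite /sperm_ket /flip2 /sign2 /Psi /applyT /opmul /opexp /pauliX /pauliZ.
rewrite /phiplus !big_bool.
by case: i; case: j; case: a; case: b => /=; ring.
Qed.

Lemma S_pF_sperm_conj (p F : R) (rho : op R qq) :
  S_pF p F rho -> S_pF p F (sperm_conj flip2 sign2 rho).
Proof.
have density_conj := density_sperm_conj flip2K sign2_flip2.
case=> rho_dens [[sigma [sigma_dens rho_def]] rho_fid].
split; first exact: density_conj.
split; first exists (sperm_conj flip2 sign2 sigma).
  split; first exact: density_conj.
  by rewrite rho_def sperm_conj_comb sperm_conj_proj sperm_ket_Psi00.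
by rewrite (expect_sperm_conj flip2K sign2_flip2) sperm_ket_Psi00 -rho_fid.
Qed.

Lemma sperm_conj_tensor (rho1 rho2 : op R qq) :
  sperm_conj flip4 sign4 (tensor rho1 rho2) =
  tensor rho1 (sperm_conj flip2 sign2 rho2).
Proof.
apply: functional_extensionality => x; apply: functional_extensionality => y.
by rewrite /sperm_conj /tensor; ring.
Qed.

(* U_B2 and U_A2 act on different registers: the B2 signs cancel in onA
   because its identity factor forces equal B2 indices, and symmetrically. *)
Lemma sperm_conj_onA (M : op R qq) :
  sperm_conj flip4 sign4 (onA M) = onA (sperm_conj flipT signT M).
Proof.
apply: functional_extensionality => -[[a1 b1] [a2 b2]].
apply: functional_extensionality => -[[a1' b1'] [a2' b2']].
rewrite /sperm_conj /onA /flip4 /flip2 /flipT /sign4 /sign2 /signT /= !signr_addb.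
by case: (b1 == b1'); case: i; case: j; case: a2; case: b2; case: a2'; case: b2';
  rewrite /=; ring.
Qed.

Lemma sperm_conj_onB (M : op R qq) :
  sperm_conj flip4 sign4 (onB M) = onB (sperm_conj flipT signT M).
Proof.
apply: functional_extensionality => -[[a1 b1] [a2 b2]].
apply: functional_extensionality => -[[a1' b1'] [a2' b2']].
rewrite /sperm_conj /onB /flip4 /flip2 /flipT /sign4 /sign2 /signT /= !signr_addb.
by case: (a1 == a1'); case: i; case: j; case: a2; case: b2; case: a2'; case: b2';
  rewrite /=; ring.
Qed.

Lemma sperm_conj_proj_Psi :
  sperm_conj flipT signT (proj (Psi R i j)) = proj (Psi R false false).
Proof. by rewrite sperm_conj_proj sperm_ket_Psi. Qed.

Let trace_conj4 := @trace_sperm_conj R _ _ sign4 flip4K.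
Let conj4_mul := @sperm_conj_mul R _ _ sign4 flip4K.

Lemma pprime_sperm_conj (rho1 rho2 : op R qq) :
  pprime i j rho1 rho2 = pprime false false rho1 (sperm_conj flip2 sign2 rho2).
Proof.
by rewrite /pprime -trace_conj4 conj4_mul sperm_conj_onA sperm_conj_proj_Psi
  sperm_conj_tensor.
Qed.

Lemma Fprime_sperm_conj (rho1 rho2 : op R qq) :
  Fprime i j rho1 rho2 = Fprime false false rho1 (sperm_conj flip2 sign2 rho2).
Proof.
rewrite /Fprime pprime_sperm_conj -trace_conj4 !conj4_mul.
by rewrite sperm_conj_onA sperm_conj_onB sperm_conj_proj_Psi sperm_conj_tensor.
Qed.

Lemma Fvalues_eq00 (p F : R) : Fvalues p F i j = Fvalues p F false false.
Proof.
have conjK := sperm_conjK flip2K sign2_flip2.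
apply: functional_extensionality => x; apply: propositional_extensionality.
split=> -[rho1 [rho2 [S1 [S2 [pr_neq0 ->]]]]];
  exists rho1, (sperm_conj flip2 sign2 rho2);
  (split=> //; split; first exact: S_pF_sperm_conj).
  by rewrite -pprime_sperm_conj -Fprime_sperm_conj.
by rewrite pprime_sperm_conj Fprime_sperm_conj conjK.
Qed.

End LocalPauli.

Theorem proposition3 (R : rcfType) (p F : R) :
  0 <= F -> F <= 1 -> 0 <= p -> p <= F ->
  forall (i j : bool) (x : R[i]),
    (is_max (Fvalues p F i j) x <-> is_max (Fvalues p F false false) x) /\
    (is_min (Fvalues p F i j) x <-> is_min (Fvalues p F false false) x).
Proof.
by move=> _ _ _ _ i j x; rewrite Fvalues_eq00.
Qed.
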